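(* Let $K$ be a finite field of characteristic $p$ and order $q=p^n$, and let $s$ be a positive integer with $\gcd(s,q-1)=1$ that is nondegenerate over $K$. If $u\in K$ and $v_p(W_u)\ge v_p(q)=n$, then $W_u=0$. In particular, either $v_p(W_u)<v_p(q)$ or $v_p(W_u)=\infty$.
   Context: $\zeta=\exp(2\pi i/p)$, $\psi(x)=\zeta^{\mathrm{Tr}(x)}$ with $\mathrm{Tr}$ the absolute trace of $K$ to $\mathbb{F}_p$; $W_u=\sum_{x\in K}\psi(x^s-ux)$. $v_p$ denotes the $p$-adic valuation on $\mathbb{Q}(\zeta)$ extending the usual one on $\mathbb{Q}$ (so $v_p(p)=1$, $v_p(\zeta-1)=1/(p-1)$, $v_p(0)=\infty$). The exponent $s$ is degenerate over $K$ if $s\equiv p^k\pmod{q-1}$ for some integer $k$, and nondegenerate otherwise. *)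

From HB Require Import structures.
From mathcomp Require Import all_boot all_order all_algebra all_field.
Set Implicit Arguments. Unset Strict Implicit. Unset Printing Implicit Defensive.
Import Order.TTheory GRing.Theory Num.Theory.
Local Open Scope ring_scope.

(* zeta = exp(2 pi i / p) in algC: p.-root (-1) is the p-th root of -1 of
   minimal nonnegative argument, i.e. exp(i pi / p); its square is exp(2 pi i/p). *)
Definition zeta (p : nat) : algC := (p.-root (-1)) ^+ 2.

Definition absTr (K : finFieldType) (p n : nat) (x : K) : K :=
  \sum_(i < n) x ^+ (p ^ i).

(* the residue k in {0,..,p-1} with k%:R = Tr x (Tr x lies in the prime field) *)
Definition tr_res (K : finFieldType) (p n : nat) (x : K) : nat :=
  odflt ord0 [pick k : 'I_p.+1 | (k < p)%N && ((k%:R : K) == absTr p n x)].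

Definition psi (K : finFieldType) (p n : nat) (x : K) : algC :=
  zeta p ^+ tr_res p n x.

Definition W (K : finFieldType) (p n s : nat) (u : K) : algC :=
  \sum_(x : K) psi p n (x ^+ s - u * x).

Definition degenerate (p q s : nat) : Prop :=
  exists k : nat, s = p ^ k %[mod q.-1].

(* v_p(x) >= m, for x in Z[zeta] : since (p) = (1-zeta)^(p-1) is the unique
   (totally ramified) prime above p, v_p(x) >= m iff p^m divides x in the
   algebraic integers. *)
Definition vp_ge (p m : nat) (x : algC) : bool := ((p ^ m)%:R %| x)%A.

From HB Require Import structures.
From mathcomp Require Import all_boot all_order all_algebra all_field.
From mathcomp Require Import zify.
Set Implicit Arguments. Unset Strict Implicit. Unset Printing Implicit Defensive.
Import Order.TTheory GRing.Theory Num.Theory.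
Local Open Scope ring_scope.

(* W_u is a sum of q p-th roots of unity zeta^(Tr(x^s - ux)).  Its Galois
   conjugates are the sums G_a = sum_x zeta^(a Tr(x^s - ux)) for 0 < a < p, and
   G_0 = q.  If q divides W_u <> 0 among algebraic integers, then prod_a G_a is a
   nonzero rational integer divisible by q^p; since |G_a| <= q for every a, this
   forces |W_u| = q, so all terms of W_u are equal, to zeta^(Tr 0) = 1, i.e.
   Tr(x^s - ux) = 0 for all x.  But after reducing exponents modulo q - 1,
   x |-> Tr(x^s - ux) is a polynomial of degree < q - 1 in which, for s coprime to
   q - 1 and nondegenerate, the monomial X^(s mod (q-1)) has coefficient 1; so it
   cannot vanish on all of K. *)

Lemma ord_eq_of_dvdn_subn (p : nat) (i j : 'I_p) : (i <= j)%N -> (p %| j - i)%N -> i = j.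
Proof.
move=> le_ij; rewrite /dvdn modn_small => [/eqP ji|].
  by apply/val_inj/eqP; rewrite eqn_leq le_ij -subn_eq0 ji.
exact: leq_ltn_trans (leq_subr _ _) (ltn_ord j).
Qed.

Lemma natr_ord_inj (R : nzRingType) (p : nat) :
  p \in [pchar R] -> injective (fun k : 'I_p => k%:R : R).
Proof.
move=> pcharR i j /eqP; wlog le_ij : i j / (i <= j)%N.
  move=> wlog_le; case: (leqP i j) => [|/ltnW] le e; first exact: wlog_le.
  by apply/esym/wlog_le; rewrite // eq_sym.
by rewrite eq_sym -subr_eq0 -natrB // -(dvdn_pcharf pcharR) => /(ord_eq_of_dvdn_subn le_ij).
Qed.

Lemma mul_ord_inj (p b : nat) (p_gt0 : (0 < p)%N) : coprime b p ->
  injective (fun a : 'I_p => Ordinal (ltn_pmod (a * b) p_gt0)).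
Proof.
move=> b_coprime a a' /(congr1 val) /= /eqP; wlog le_aa' : a a' / (a <= a')%N.
  move=> wlog_le; case: (leqP a a') => [|/ltnW] le e; first exact: wlog_le.
  by apply/esym/wlog_le; rewrite // eq_sym.
rewrite eq_sym eqn_mod_dvd ?leq_mul2r ?le_aa' ?orbT // -mulnBl Gauss_dvdl 1?coprime_sym //.
exact: ord_eq_of_dvdn_subn.
Qed.

Lemma ord_coprime_prime (p : nat) (a : 'I_p) : prime p -> a != 0 :> nat -> coprime a p.
Proof. by move=> p_prime a_neq0; rewrite coprime_sym prime_coprime // /dvdn modn_small. Qed.

Lemma zeta_primitive_root (p : nat) : prime p -> p.-primitive_root (zeta p).
Proof.
move=> p_prime; have p_gt1 := prime_gt1 p_prime.
set r := p.-root (-1 : algC).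
have r_p : r ^+ p = -1 by rewrite rootCK // ltnW.
have zeta_p : zeta p ^+ p = 1 by rewrite /zeta -exprM mulnC exprM r_p sqrrN expr1n.
have [m m_prim m_dvd] := prim_order_exists (ltnW p_gt1) zeta_p.
have /primeP[_ /(_ m m_dvd)/orP[/eqP m1|/eqP mp]] := p_prime; last by rewrite mp in m_prim.
move: (prim_expr_order m_prim); rewrite m1 expr1 /zeta -/r => /eqP.
rewrite sqrf_eq1 => /orP[/eqP r1|/eqP r1].
  by move: r_p; rewrite r1 expr1n => /eqP; rewrite -subr_eq0 opprK (pnatr_eq0 _ 2).
by have := rootC_lt0 (-1 : algC) p_gt1; rewrite -/r r1 ltrN10.
Qed.

Lemma pchar_frobenius_fixed_natr (F : idomainType) (p : nat) (y : F) :
  prime p -> p \in [pchar F] -> y ^+ p = y -> exists2 k, (k < p)%N & k%:R = y.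
Proof.
move=> p_prime pcharF y_fixed.
have [/existsP[k /eqP <-]|no_k] := boolP [exists k : 'I_p, k%:R == y]; first by exists k.
pose P : {poly F} := 'X^p - 'X.
have size_P : size P = p.+1.
  by rewrite size_polyDl ?size_polyXn // size_polyN size_polyX ltnS prime_gt1.
have P_neq0 : P != 0 by rewrite -size_poly_eq0 size_P.
have := max_poly_roots P_neq0 (rs := y :: [seq k%:R | k : 'I_p]).
rewrite size_P /= size_map size_enum_ord ltnn map_inj_uniq ?enum_uniq //; last exact: natr_ord_inj.
rewrite /root /P !hornerE y_fixed subrr eqxx /=.
have -> : all (root P) [seq k%:R | k : 'I_p].
  apply/allP=> _ /mapP[k _ ->].
  by rewrite /root /P !hornerE -(pFrobenius_autE pcharF) rmorph_nat subrr.
have -> : y \notin [seq k%:R | k : 'I_p].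
  by apply: contra no_k => /mapP[k _ ->]; apply/existsP; exists k.
by move/(_ isT isT).
Qed.

Section AbsoluteTrace.

Variables (K : finFieldType) (p n : nat).
Hypotheses (p_prime : prime p) (pcharK : p \in [pchar K]) (cardK : #|K| = (p ^ n)%N).

Lemma absTr_frobenius (x : K) : absTr p n x ^+ p = absTr p n x.
Proof.
case: n cardK => [|m] card_m.
  by rewrite /absTr big_ord0 expr0n gtn_eqF ?prime_gt0.
rewrite /absTr -(pFrobenius_autE pcharK) rmorph_sum /=.
under eq_bigr do rewrite pFrobenius_autE -exprM -expnSr.
by rewrite big_ord_recr big_ord_recl /= -card_m expf_card expn0 expr1 addrC.
Qed.

Lemma natr_tr_res (x : K) : (tr_res p n x)%:R = absTr p n x.
Proof.
rewrite /tr_res; case: pickP => [k /andP[_ /eqP //]|no_k].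
have [k k_lt_p k_tr] := pchar_frobenius_fixed_natr p_prime pcharK (absTr_frobenius x).
by have := no_k (@Ordinal p.+1 k (ltnW k_lt_p)); rewrite /= k_lt_p k_tr eqxx.
Qed.

Lemma psi_eq1 (x : K) : (psi p n x == 1) = (absTr p n x == 0).
Proof.
by rewrite -natr_tr_res -(prim_order_dvd (zeta_primitive_root p_prime)) (dvdn_pcharf pcharK).
Qed.

Lemma absTr0 : absTr p n (0 : K) = 0.
Proof. by rewrite /absTr big1 // => i _; rewrite expr0n eqn0Ngt expn_gt0 prime_gt0. Qed.

End AbsoluteTrace.

Lemma sum_expr_root1_rat (p : nat) (w : algC) : w ^+ p = 1 -> \sum_(b < p) w ^+ b \in Crat.
Proof.
move=> wp; have [->|w_neq1] := eqVneq w 1.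
  by rewrite (eq_bigr (fun=> 1)) => [|b _]; rewrite ?expr1n // sumr_const card_ord rpred_nat.
have /esym/eqP := subrX1 w p; rewrite wp subrr mulf_eq0 subr_eq0 (negbTE w_neq1) /=.
by move/eqP->; apply: rpred0.
Qed.

Lemma norm_prim_root (n : nat) (z : algC) : (0 < n)%N -> n.-primitive_root z -> `|z| = 1.
Proof.
move=> n_gt0 z_prim; apply/eqP; rewrite -(pexpr_eq1 n_gt0) ?normr_ge0 //.
by rewrite -normrX (prim_expr_order z_prim) normr1.
Qed.

Section SumsOfPrimeRootsOfUnity.

Variables (p : nat) (z : algC) (I : finType) (t : I -> nat).
Hypotheses (p_prime : prime p) (z_prim : p.-primitive_root z).

Definition power_sum (c : nat) : algC := \sum_i z ^+ (c * t i).
Local Notation G := power_sum.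
Local Notation q := (#|I|%:R : algC).

Lemma power_sum0 : G 0 = q.
Proof. by rewrite /G (eq_bigr (fun=> 1)) => [|i _]; rewrite ?sumr_const // mul0n expr0. Qed.

Lemma power_sum1 : G 1 = \sum_i z ^+ t i.
Proof. by apply: eq_bigr => i _; rewrite mul1n. Qed.

Lemma power_sum_mod (c : nat) : G c = G (c %% p).
Proof.
by apply: eq_bigr => i _; rewrite -[RHS](prim_expr_mod z_prim) modnMml prim_expr_mod.
Qed.

Lemma norm_power_sum_le (c : nat) : `|G c| <= q.
Proof.
apply: le_trans (ler_norm_sum _ _ _) _.
rewrite (eq_bigr (fun=> 1)) ?sumr_const // => i _.
by rewrite normrX (norm_prim_root (prime_gt0 p_prime) z_prim) expr1n.
Qed.

Lemma power_sum_aut (c : nat) : coprime c p ->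
  exists nu : {rmorphism algC -> algC}, nu (G 1) = G c.
Proof.
move=> c_coprime; have [nu nu_z] := Qn_aut_exists c_coprime; exists nu.
rewrite rmorph_sum; apply: eq_bigr => i _.
by rewrite mul1n rmorphXn /= nu_z ?(prim_expr_order z_prim) // -exprM.
Qed.

Lemma prod_power_sum_rat : \prod_(a < p) G a \in Crat.
Proof.
have p_gt0 := prime_gt0 p_prime; pose a0 : 'I_p := Ordinal p_gt0.
(* S is rational, being a sum of complete geometric sums of p-th roots of unity;
   for b <> 0, a |-> a * b permutes 'I_p, so each term of S is the product. *)
pose S := \sum_(b < p) \prod_(a < p) G (a * b).
have S_split : S = q ^+ p + (\prod_(a < p) G a) *+ p.-1.
  rewrite /S (bigD1 a0) //=; congr (_ + _).
    by under eq_bigr do rewrite muln0; rewrite power_sum0 prodr_const card_ord.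
  have -> : p.-1 = #|predC1 a0| by rewrite cardC1 card_ord.
  rewrite -sumr_const; apply: eq_bigr => b b_neq0.
  have b_coprime := ord_coprime_prime p_prime b_neq0.
  rewrite [RHS](reindex_inj (mul_ord_inj (p_gt0 := p_gt0) b_coprime)) /=.
  by apply: eq_bigr => a _; rewrite power_sum_mod.
have S_rat : S \in Crat.
  rewrite /S; under eq_bigr do rewrite bigA_distr_bigA /=.
  rewrite exchange_big /=; apply: rpred_sum => f _.
  pose w := \prod_(a < p) z ^+ (a * t (f a)).
  rewrite (eq_bigr (fun b : 'I_p => w ^+ b)) => [|b _]; last first.
    by rewrite /w -prodrXl; apply: eq_bigr => a _; rewrite -exprM mulnAC.
  apply: sum_expr_root1_rat; rewrite /w -prodrXl big1 // => a _.
  by rewrite -exprM mulnC exprM (prim_expr_order z_prim) expr1n.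
have p1_neq0 : (p.-1%:R : algC) != 0 by rewrite pnatr_eq0 -lt0n -ltnS prednK ?prime_gt1.
have -> : \prod_(a < p) G a = (S - q ^+ p) / p.-1%:R.
  by rewrite S_split addrC addKr -mulr_natr mulfK.
by rewrite rpredM ?rpredV ?rpredB ?rpredX ?rpred_nat.
Qed.

Lemma card_neq0_power_sum1 : G 1 != 0 -> q != 0.
Proof.
by apply: contra; rewrite pnatr_eq0 => /eqP/card0_eq I0; rewrite /G big_pred0.
Qed.

Lemma power_sum_conj (a : 'I_p) : a != 0 :> nat ->
  exists2 nu : {rmorphism algC -> algC}, nu (G 1) = G a & nu q = q.
Proof.
move=> a_neq0; have [nu nuG] := power_sum_aut (ord_coprime_prime p_prime a_neq0).
by exists nu; rewrite ?rmorph_nat.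
Qed.

Lemma prod_power_sum_neq0 : G 1 != 0 -> \prod_(a < p) G a != 0.
Proof.
move=> G1_neq0; apply/prodf_neq0 => a _.
have [->|/power_sum_conj[nu <- _]] := eqVneq (a : nat) 0%N.
  by rewrite power_sum0 card_neq0_power_sum1.
by rewrite fmorph_eq0.
Qed.

Lemma prod_power_sum_int : (q %| G 1)%A -> G 1 != 0 -> (\prod_(a < p) G a) / q ^+ p \in Num.int.
Proof.
move=> q_dvd G1_neq0; have q_neq0 := card_neq0_power_sum1 G1_neq0.
apply: Cint_rat_Aint; first by rewrite rpredM ?rpredV ?rpredX ?rpred_nat ?prod_power_sum_rat.
rewrite -[p in q ^+ p](card_ord p) -prodr_const -prodf_div rpred_prod // => a _.
have [->|/power_sum_conj[nu <- <-]] := eqVneq (a : nat) 0%N.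
  by rewrite power_sum0 divff ?Aint1.
by rewrite -fmorph_div Aint_aut; move: q_dvd; rewrite unfold_in (negbTE q_neq0).
Qed.

Lemma norm_power_sum1_ge : (q %| G 1)%A -> G 1 != 0 -> q <= `|G 1|.
Proof.
move=> q_dvd G1_neq0; pose M := \prod_(a < p) G a.
have q_neq0 := card_neq0_power_sum1 G1_neq0.
have q_gt0 : 0 < q by rewrite lt_def q_neq0 ler0n.
have M_ge : q ^+ p <= `|M|.
  have M_neq0 : M / q ^+ p != 0.
    by rewrite mulf_neq0 ?invr_eq0 ?prod_power_sum_neq0 ?expf_neq0.
  have := norm_intr_ge1 (prod_power_sum_int q_dvd G1_neq0) M_neq0.
  by rewrite normrM normfV normrX normr_nat ler_pdivlMr ?mul1r ?exprn_gt0.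
have M_le : `|M| <= `|G 1| * q ^+ p.-1.
  pose a1 : 'I_p := Ordinal (prime_gt1 p_prime).
  rewrite /M normr_prod (bigD1 a1) //= ler_wpM2l //.
  have -> : p.-1 = #|predC1 a1| by rewrite cardC1 card_ord.
  by rewrite -prodr_const; apply: ler_prod => a _; rewrite normr_ge0 norm_power_sum_le.
rewrite -(ler_pM2r (exprn_gt0 p.-1 q_gt0)) -exprS prednK ?prime_gt0 //.
exact: le_trans M_ge M_le.
Qed.

Lemma sum_prim_root_pow_const :
  (q %| \sum_i z ^+ t i)%A -> \sum_i z ^+ t i != 0 -> exists c, forall i, z ^+ t i = c.
Proof.
rewrite -power_sum1 => q_dvd G1_neq0.
have norm_z_pow i : `|z ^+ t i| = 1.
  by rewrite normrX (norm_prim_root (prime_gt0 p_prime) z_prim) expr1n.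
have norm_G1 : `|\sum_i z ^+ t i| = \sum_i `|z ^+ t i|.
  rewrite [RHS](eq_bigr (fun=> 1)) => [|i _]; last exact: norm_z_pow.
  rewrite sumr_const -power_sum1.
  by apply/eqP; rewrite eq_le norm_power_sum_le norm_power_sum1_ge.
have [c _ c_const] := normC_sum_eq1 norm_G1 (fun i _ => norm_z_pow i).
by exists c => i; apply: c_const.
Qed.

End SumsOfPrimeRootsOfUnity.

Lemma expr_mod_card_pred (F : finFieldType) (x : F) (m : nat) :
  (0 < m %% #|F|.-1)%N -> x ^+ m = x ^+ (m %% #|F|.-1).
Proof.
move=> m_mod_gt0; have [->|x_neq0] := eqVneq x 0.
  have m_gt0 : (0 < m)%N by case: m m_mod_gt0; rewrite ?mod0n.
  by rewrite !expr0n !eqn0Ngt m_gt0 m_mod_gt0.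
have x_unit : x ^+ #|F|.-1 = 1.
  apply: (mulIf x_neq0); rewrite mul1r -exprSr prednK ?expf_card //.
  exact: leq_trans (finNzRing_gt1 F).
by rewrite {1}(divn_eq m #|F|.-1) exprD mulnC exprM x_unit expr1n mul1r.
Qed.

Lemma finField_poly_eq0 (F : finFieldType) (P : {poly F}) :
  (size P < #|F|)%N -> (forall x, P.[x] = 0) -> P = 0.
Proof.
move=> size_lt P_vanish; apply/eqP; apply: contraT => P_neq0.
have := max_poly_roots P_neq0 (rs := enum F).
rewrite enum_uniq -cardE ltnNge ltnW //=.
have -> : all (root P) (enum F) by apply/allP => x _; rewrite /root P_vanish.
by move/(_ isT isT).
Qed.

Section NondegenerateExponent.

Variables (K : finFieldType) (p n s : nat) (u : K).
Hypotheses (p_prime : prime p) (pcharK : p \in [pchar K]) (cardK : #|K| = (p ^ n)%N).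
Hypotheses (s_coprime : coprime s (p ^ n).-1) (s_nondeg : ~ degenerate p (p ^ n) s).

Local Notation q := (p ^ n)%N.
Local Notation e i := ((s * p ^ i) %% q.-1)%N.

Lemma card_pred_gt1 : (1 < q.-1)%N.
Proof.
have q_gt1 : (1 < q)%N by rewrite -cardK finNzRing_gt1.
rewrite ltnNge; apply/negP => q_le2; apply: s_nondeg; exists 0%N.
have -> : q.-1 = 1%N by lia.
by rewrite !modn1.
Qed.

Lemma expn_lt_card_pred i : (i < n)%N -> (p ^ i < q.-1)%N.
Proof.
case: i => [|i] i_lt_n; first by rewrite expn0 card_pred_gt1.
have p_gt1 := prime_gt1 p_prime.
have : (p * p ^ i.+1 <= q)%N by rewrite -expnS leq_pexp2l ?prime_gt0.
have : (p <= p ^ i.+1)%N by rewrite expnS leq_pmulr // expn_gt0 ltnW.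
nia.
Qed.

Lemma degree_gt0 : (0 < n)%N.
Proof. by case: n card_pred_gt1. Qed.

Lemma coprime_char_card_pred : coprime p q.-1.
Proof.
by rewrite -(coprime_pexpl _ _ degree_gt0) coprime_sym coprimePn // expn_gt0 prime_gt0.
Qed.

Lemma trace_exp_gt0 i : (0 < e i)%N.
Proof.
rewrite lt0n; apply: contraTneq card_pred_gt1 => /eqP q_dvd.
have : coprime (s * p ^ i) q.-1 by rewrite coprimeMl s_coprime coprimeXl // coprime_char_card_pred.
by rewrite /coprime (gcdn_idPr q_dvd) => /eqP ->.
Qed.

Lemma trace_exp0_neq_expn i : e 0 != (p ^ i)%N.
Proof.
apply/eqP => e0E; apply: s_nondeg; exists i.
by rewrite -e0E muln1 modn_mod.
Qed.

Lemma trace_exp_neq0 i : (0 < i < n)%N -> e i != e 0.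
Proof.
case/andP=> i_gt0 i_lt_n; apply/eqP => /eqP.
rewrite muln1 eqn_mod_dvd ?leq_pmulr ?expn_gt0 ?prime_gt0 // -{2}[s]muln1 -mulnBr.
rewrite Gauss_dvdr 1?coprime_sym // /dvdn modn_small; last first.
  by rewrite (leq_ltn_trans (leq_subr _ _)) ?expn_lt_card_pred.
have p_le_pi : (p <= p ^ i)%N.
  by case: i i_gt0 {i_lt_n} => // i _; rewrite expnS leq_pmulr // expn_gt0 prime_gt0.
by rewrite subn_eq0 leqNgt (leq_trans (prime_gt1 p_prime) p_le_pi).
Qed.

Definition trace_poly : {poly K} :=
  \sum_(i < n) ('X^(e i) - u ^+ (p ^ i) *: 'X^(p ^ i)).

Lemma coef_trace_poly j :
  trace_poly`_j = \sum_(i < n) ((j == e i)%:R - u ^+ (p ^ i) * (j == p ^ i)%N%:R).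
Proof. by rewrite coef_sum; apply: eq_bigr => i _; rewrite coefB coefZ !coefXn. Qed.

Lemma horner_trace_poly x : trace_poly.[x] = absTr p n (x ^+ s - u * x).
Proof.
have pchar_expn i : [pchar K].-nat (p ^ i)%N.
  by rewrite (eq_pnat _ (pcharf_eq pcharK)) pnatX pnat_id.
rewrite /absTr horner_sum; apply: eq_bigr => i _.
rewrite exprDn_pchar // exprNn_pchar // -exprM exprMn !hornerE.
by rewrite -cardK -expr_mod_card_pred // cardK trace_exp_gt0.
Qed.

Lemma size_trace_poly : (size trace_poly <= q.-1)%N.
Proof.
apply/leq_sizeP => j j_ge; rewrite coef_trace_poly big1 // => i _.
rewrite !gtn_eqF ?mulr0 ?subrr //; first exact: leq_trans (expn_lt_card_pred (ltn_ord i)) j_ge.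
exact: leq_trans (ltn_pmod _ (ltnW card_pred_gt1)) j_ge.
Qed.

Lemma coef_trace_poly_exp0 : trace_poly`_(e 0) = 1.
Proof.
rewrite coef_trace_poly (bigD1 (Ordinal degree_gt0)) //= eqxx (negbTE (trace_exp0_neq_expn _)).
rewrite mulr0 subr0 big1 ?addr0 // => i i_neq0.
rewrite (negbTE (trace_exp0_neq_expn i)) eq_sym (negbTE (trace_exp_neq0 _)) ?mulr0 ?subrr //.
by rewrite ltn_ord andbT lt0n.
Qed.

Lemma nondegenerate_absTr_neq0 : exists x : K, absTr p n (x ^+ s - u * x) != 0.
Proof.
apply/existsP; apply: contraT; rewrite negb_exists => /forallP /= absTr_eq0.
have : trace_poly = 0.
  apply: finField_poly_eq0 => [|x]; last by rewrite horner_trace_poly; apply/eqP/negbNE.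
  by rewrite cardK (leq_ltn_trans size_trace_poly) // prednK ?expn_gt0 ?prime_gt0.
by move/(congr1 (coefp (e 0))); rewrite /= coef_trace_poly_exp0 coef0 => /eqP; rewrite oner_eq0.
Qed.

End NondegenerateExponent.

Theorem lemma3p4 (K : finFieldType) (p n : nat) (s : nat)
    (hp : prime p) (hchar : p \in [pchar K]) (hcard : #|K| = (p ^ n)%N)
    (hs : (0 < s)%N) (hcop : coprime s (p ^ n).-1)
    (hnd : ~ degenerate p (p ^ n) s) (u : K) :
  vp_ge p n (W p n s u) -> W p n s u = 0.
Proof.
move=> pn_dvd_W; apply/eqP; apply: contraT => W_neq0.
have [x absTr_neq0] := nondegenerate_absTr_neq0 u hp hchar hcard hcop hnd.
have card_dvd_W : (#|K|%:R %| W p n s u)%A by rewrite hcard.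
have [c psi_const] := sum_prim_root_pow_const hp (zeta_primitive_root hp) card_dvd_W W_neq0.
have psi_x : psi p n (x ^+ s - u * x) = psi p n (0 ^+ s - u * 0).
  exact: etrans (psi_const x) (esym (psi_const 0)).
move: absTr_neq0; rewrite -(psi_eq1 hp hchar hcard) psi_x (psi_eq1 hp hchar hcard).
by rewrite expr0n gtn_eqF // mulr0 subr0 (absTr0 K n hp) eqxx.
Qed.
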